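(* Fix $n$ and $T^n\in\mathcal A^n$. Then for every $t\ge0$, $\bar T^n(t)$ is a stopping time for the multi-parameter filtration $\{\mathcal G^n_u\}_{u\in\mathcal U}$, i.e. $\{\bar T^n(t)\preccurlyeq u\}\in\mathcal G^n_u$ for every $u\in\mathcal U$.
   Context: Finite sets $\mathcal I$, $\mathcal K$, activities $\mathcal J\subset\mathcal I\times\mathcal K$; $\mathcal J_i=\{(i,k)\in\mathcal J\}$, $\mathcal J^k=\{(i,k)\in\mathcal J\}$; $G$ is the $K\times J$ matrix with $G_{kj}=1_{j\in\mathcal J^k}$. For fixed $n$: rates $\lambda^n_i,\mu^n_j>0$; mutually independent renewal processes $\check A_i,\check S_j$ with right-continuous paths and IID strictly positive interarrival times; a random element $\Upsilon$ in a Polish space independent of them; $A^n_i(t)=\check A_i(\lambda^n_it)$, $S^n_j(t)=\check S_j(\mu^n_jt)$. $\mathcal A^n$ is the set of processes $T^n=(T^n_j)_{j\in\mathcal J}$ with continuous nondecreasing $1$-Lipschitz paths, $T^n(0)=0$, such that with $D^n_j=S^n_j\circ T^n_j$, $X^n_i(t)=A^n_i(t)-\sum_{j\in\mathcal J_i}D^n_j(t)$, $I^n_k(t)=t-(GT^n(t))_k$, one has $X^n_i\ge0$, $I^n_k$ nondecreasing, and $T^n$ adapted to $\mathcal F^n_t=\sigma\{A^n(s),D^n(s),s\le t;\Upsilon\}$. Let $\mathcal J^0=\{(i,0):i\in\mathcal I\}\cup\mathcal J$ and set $S^n_{(i,0)}=A^n_i$. Let $\mathcal U=\mathbb R_+^{\mathcal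 J^0}$ with partial order $u\preccurlyeq v$ iff $u_j\le v_j$ for all $j$; $S^n(v)=(S^n_j(v_j))_{j\in\mathcal J^0}$. $\mathcal G^n_u=\sigma\{\Upsilon,S^n(v):v\preccurlyeq u\}$, and $\bar T^n(t)\in\mathcal U$ is defined by $\bar T^n_{(i,0)}(t)=t$, $i\in\mathcal I$, and $\bar T^n_j(t)=T^n_j(t)$, $j\in\mathcal J$. *)

From HB Require Import structures.
From mathcomp Require Import all_boot all_order all_algebra.
From mathcomp Require Import all_classical all_reals all_analysis.
Set Implicit Arguments. Unset Strict Implicit. Unset Printing Implicit Defensive.
Import Order.TTheory GRing.Theory Num.Theory numFieldNormedType.Exports.
Local Open Scope classical_set_scope.
Local Open Scope ring_scope.

Definition gen_sigma (Omega : Type) (G : set (set Omega)) : set (set Omega) :=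
  <<s G >>.

Definition borel_sets (Y : topologicalType) : set (set Y) :=
  <<s [set U : set Y | open U] >>.

(** Polish space: a complete metric space (Hausdorff pseudometric = metric)
    which is separable *)
Definition polish_space (R : realType) (Y : completePseudoMetricType R) : Prop :=
  hausdorff_space Y /\ exists D : set Y, countable D /\ dense D.

Definition preim_R (R : realType) (Omega : Type) (f : Omega -> R) : set (set Omega) :=
  [set f @^-1` B | B in [set B : set R | measurable B]].

Definition mutually_independent d (Omega : measurableType d) (R : realType)
  (P : probability Omega R) (idx : eqType) (D : set idx)
  (F : idx -> set (set Omega)) : Prop :=
  forall (s : seq idx) (A : idx -> set Omega), uniq s ->
    (forall i, i \in s -> D i /\ F i (A i)) ->
    P (\bigcap_(i in [set i | i \in s]) A i) = (\prod_(i <- s) P (A i))%E.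

(** [N] is a renewal counting process (on t >= 0) with IID strictly positive
    interarrival times: N t = max {m | xi_0 + ... + xi_(m-1) <= t}
    (finite, right-continuous paths). *)
Definition renewal_process d (Omega : measurableType d) (R : realType)
  (P : probability Omega R) (N : R -> Omega -> nat) : Prop :=
  exists xi : nat -> Omega -> R,
    [/\ (forall k, measurable_fun setT (xi k)),
        (forall k w, 0 < xi k w),
        mutually_independent P setT (fun k => preim_R (xi k)),
        (forall k B, measurable B -> P (xi k @^-1` B) = P (xi 0%N @^-1` B)) &
        (forall t w m, 0 <= t -> (m <= N t w)%N = (\sum_(k < m) xi k w <= t))].

Section network.
Context (R : realType) (Omega : Type) (I K : finType) (J : {set (I * K)}).
Context (lam : I -> R) (mu : I * K -> R).
Context (Ach : I -> R -> Omega -> nat) (Sch : I * K -> R -> Omega -> nat).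

Definition A_n (i : I) (t : R) (w : Omega) : nat := Ach i (lam i * t) w.
Definition S_n (j : I * K) (t : R) (w : Omega) : nat := Sch j (mu j * t) w.

Context (T : I * K -> R -> Omega -> R).

Definition D_n (j : I * K) (t : R) (w : Omega) : nat := S_n j (T j t w) w.

Definition X_n (i : I) (t : R) (w : Omega) : int :=
  (A_n i t w)%:Z - (\sum_(j in J | j.1 == i) D_n j t w)%:Z.

Definition GT_n (k : K) (t : R) (w : Omega) : R :=
  \sum_(j in J | j.2 == k) T j t w.

Definition I_n (k : K) (t : R) (w : Omega) : R := t - GT_n k t w.

Context (Y : Type) (Ups : Omega -> Y) (borelY : set (set Y)).

Definition F_n (t : R) : set (set Omega) :=
  gen_sigma
   ([set E | exists s (B : set ((I -> nat) * (I * K -> nat))),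
        0 <= s <= t /\
        E = (fun w => (fun i => A_n i s w,
                       fun j => if j \in J then D_n j s w else 0%N)) @^-1` B]
    `|` [set Ups @^-1` B | B in borelY]).

Definition admissible : Prop :=
  (forall j w, j \in J -> {within [set t : R | 0 <= t], continuous (fun t : R => T j t w)}) /\
  (forall j w s t, j \in J -> 0 <= s -> s <= t -> T j s w <= T j t w) /\
  (forall j w s t, j \in J -> 0 <= s -> 0 <= t -> `|T j t w - T j s w| <= `|t - s|) /\
  (forall j w, j \in J -> T j 0 w = 0) /\
  (forall i t w, 0 <= t -> (0 <= X_n i t w)%R) /\
  (forall k w s t, 0 <= s -> s <= t -> I_n k s w <= I_n k t w) /\
  (forall j t B, j \in J -> 0 <= t -> measurable B -> F_n t (T j t @^-1` B)).

End network.

Section multiparam.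
Context (R : realType) (Omega : Type) (I K : finType) (J : {set (I * K)}).
Context (lam : I -> R) (mu : I * K -> R).
Context (Ach : I -> R -> Omega -> nat) (Sch : I * K -> R -> Omega -> nat).
Context (Y : Type) (Ups : Omega -> Y) (borelY : set (set Y)).

(** Elements of U = R_+^{J^0} are represented by a pair (uI, uJ):
    uI i is the (i,0)-coordinate and uJ j the j-coordinate (j in J).
    S^n(v) = (S^n_j(v_j))_{j in J^0}, with S^n_{(i,0)} = A^n_i;
    coordinates outside J^0 are set to 0. *)
Definition S_vec (vI : I -> R) (vJ : I * K -> R) (w : Omega)
  : (I -> nat) * (I * K -> nat) :=
  (fun i => A_n lam Ach i (vI i) w,
   fun j => if j \in J then S_n mu Sch j (vJ j) w else 0%N).

Definition in_U (vI : I -> R) (vJ : I * K -> R) : Prop :=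
  (forall i, 0 <= vI i) /\ (forall j, j \in J -> 0 <= vJ j).

Definition preceq (vI : I -> R) (vJ : I * K -> R) (uI : I -> R) (uJ : I * K -> R) : Prop :=
  (forall i, vI i <= uI i) /\ (forall j, j \in J -> vJ j <= uJ j).

Definition G_n (uI : I -> R) (uJ : I * K -> R) : set (set Omega) :=
  gen_sigma
   ([set E | exists vI vJ (B : set ((I -> nat) * (I * K -> nat))),
        [/\ in_U vI vJ, preceq vI vJ uI uJ & E = S_vec vI vJ @^-1` B]]
    `|` [set Ups @^-1` B | B in borelY]).

(** the event {Tbar(t) <= u}, where Tbar_(i,0)(t) = t and Tbar_j(t) = T_j(t) *)
Definition Tbar_le (T : I * K -> R -> Omega -> R) (t : R)
  (uI : I -> R) (uJ : I * K -> R) : set Omega :=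
  [set w | preceq (fun _ => t) (fun j => T j t w) uI uJ].

End multiparam.

(* Follow the jump times of the departure process D = S o T. Until D jumps
   again after a time tau it equals D(tau), so up to that jump every event
   observed by the network agrees with an event of the process stopped at
   tau. Moreover, while T <= u, the values of D are read off the service
   processes S on [0, u], which G_u observes. Inductively, the set of outcomes
   still in play at the k-th jump time lies in G_u, and so does the trace on
   it of the information stopped at that time. As T is Lipschitz and D is
   right-continuous and integer valued, D jumps finitely often before t, so
   these sets exhaust {T(t) <= u}. *)

From HB Require Import structures.
From mathcomp Require Import all_boot all_order all_algebra.
From mathcomp Require Import all_classical all_reals all_analysis.
From mathcomp.algebra_tactics Require Import lra.
Set Implicit Arguments. Unset Strict Implicit. Unset Printing Implicit Defensive.
Import Order.TTheory GRing.Theory Num.Theory numFieldNormedType.Exports.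
Local Open Scope classical_set_scope.
Local Open Scope ring_scope.

(** * Closure properties of sigma-algebras *)

Section sigma_algebra_closure.
Context {Omega : Type} {A : set (set Omega)} (SA : sigma_algebra setT A).

Lemma sigma_set0 : A set0.
Proof. by case: SA. Qed.

Lemma sigma_setC {E} : A E -> A (~` E).
Proof. by case: SA => _ AC _ /AC; rewrite setTD. Qed.

Lemma sigma_setT : A setT.
Proof. by rewrite -setC0; exact: sigma_setC sigma_set0. Qed.

Lemma sigma_bigcup (F : nat -> set Omega) : (forall n, A (F n)) -> A (\bigcup_n F n).
Proof. by case: SA => _ _; apply. Qed.

Lemma sigma_setU {E1 E2} : A E1 -> A E2 -> A (E1 `|` E2).
Proof.
by move=> A1 A2; rewrite -bigcup2E; apply: sigma_bigcup => -[|[|n]] //=; exact: sigma_set0.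
Qed.

Lemma sigma_setI {E1 E2} : A E1 -> A E2 -> A (E1 `&` E2).
Proof.
by move=> A1 A2; rewrite -[_ `&` _]setCK setCI; apply/sigma_setC/sigma_setU; exact: sigma_setC.
Qed.

Lemma sigma_setD {E1 E2} : A E1 -> A E2 -> A (E1 `\` E2).
Proof. by move=> A1 A2; rewrite setDE; exact: sigma_setI A1 (sigma_setC A2). Qed.

Lemma sigma_exists (X : countType) (F : X -> set Omega) :
  (forall x, A (F x)) -> A [set w | exists x, F x w].
Proof.
move=> FA; pose G n := if @unpickle X n is Some x then F x else set0.
have -> : [set w | exists x, F x w] = \bigcup_n G n.
  apply/seteqP; split=> w /= [x]; first by exists (pickle x) => //; rewrite /G pickleK.
  by rewrite /G; case: (unpickle x) => // y _ Fy; exists y.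
by apply: sigma_bigcup => n; rewrite /G; case: (unpickle n) => //; exact: sigma_set0.
Qed.

Lemma sigma_forall (X : countType) (F : X -> set Omega) :
  (forall x, A (F x)) -> A [set w | forall x, F x w].
Proof.
move=> FA; have -> : [set w | forall x, F x w] = ~` [set w | exists x, ~ F x w].
  apply/seteqP; split=> w /=; first by move=> h [x]; apply.
  by move=> h x; apply: contrapT => nF; apply: h; exists x.
by apply: sigma_setC; apply: sigma_exists => x; exact: sigma_setC.
Qed.

Lemma sigma_cst (P : Prop) : A [set _ : Omega | P].
Proof.
have [p|np] := pselect P.
  suff -> : [set _ : Omega | P] = setT by exact: sigma_setT.
  by apply/seteqP; split.
suff -> : [set _ : Omega | P] = set0 by exact: sigma_set0.
by apply/seteqP; split.
Qed.

Lemma sigma_imply (P Q : set Omega) : A P -> A Q -> A [set w | P w -> Q w].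
Proof.
move=> AP AQ; have -> : [set w | P w -> Q w] = ~` P `|` Q.
  by apply/funext => w; rewrite /= implyE.
exact: sigma_setU (sigma_setC AP) AQ.
Qed.

Lemma sigma_imply_on (P Q : set Omega) : A P -> A (Q `&` P) -> A [set w | P w -> Q w].
Proof.
move=> AP AQP; have -> : [set w | P w -> Q w] = ~` P `|` (Q `&` P).
  apply/seteqP; split=> w /=; last by move=> [nPw Pw|[Qw _] _] //; case: (nPw Pw).
  by move=> PQ; have [Pw|nPw] := pselect (P w); [right; split=> //; exact: PQ|left].
exact: sigma_setU (sigma_setC AP) AQP.
Qed.

Lemma sigma_exists_in (X : countType) (p : X -> Prop) (F : X -> set Omega) :
  (forall x, p x -> A (F x)) -> A [set w | exists x, p x /\ F x w].
Proof.
move=> FA; apply: sigma_exists => x; have [px|npx] := pselect (p x).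
  by apply: sigma_setI; [exact: sigma_cst|exact: FA].
suff -> : (fun w => p x /\ F x w) = set0 by exact: sigma_set0.
by apply/funext => w; apply/propext; split=> // -[].
Qed.

Lemma sigma_forall_in (X : countType) (p : X -> Prop) (F : X -> set Omega) :
  (forall x, p x -> A (F x)) -> A [set w | forall x, p x -> F x w].
Proof.
move=> FA; apply: sigma_forall => x; have [px|npx] := pselect (p x).
  by apply: sigma_imply; [exact: sigma_cst|exact: FA].
suff -> : (fun w => p x -> F x w) = setT by exact: sigma_setT.
by apply/funext => w; apply/propext; split.
Qed.

Lemma sigma_algebra_trace (Y : set Omega) :
  A Y -> sigma_algebra setT [set E | A (E `&` Y)].
Proof.
move=> AY; split=> /= [|E AE|F AF]; first by rewrite set0I; exact: sigma_set0.
  rewrite setTD; have -> : ~` E `&` Y = Y `\` (E `&` Y).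
    apply/seteqP; split=> w /=; first by move=> [nE Yw]; split=> // -[].
    by move=> [Yw nEY]; split=> // Ew; exact: nEY.
  exact: sigma_setD.
by rewrite setI_bigcupl; exact: sigma_bigcup.
Qed.

Lemma sigma_nat_families (I K : finType) (a : I -> Omega -> nat) (b : K -> Omega -> nat) :
  (forall i n, A [set w | a i w = n]) -> (forall k n, A [set w | b k w = n]) ->
  forall B : set ((I -> nat) * (K -> nat)), A [set w | B (fun i => a i w, fun k => b k w)].
Proof.
move=> Aa Ab B.
suff -> : [set w | B (fun i => a i w, fun k => b k w)] =
    [set w | exists x : {ffun I -> nat} * {ffun K -> nat},
       B (fun i => x.1 i, fun k => x.2 k) /\
       (forall i, a i w = x.1 i) /\ (forall k, b k w = x.2 k)].
  apply: sigma_exists => x; apply: sigma_setI; first exact: sigma_cst.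
  by apply: sigma_setI; apply: sigma_forall => ?; [exact: Aa|exact: Ab].
apply/seteqP; split=> w /=; last by move=> [x [Bx [/funext-> /funext->]]].
have ffunK (X : finType) (g : X -> nat) : (fun x => [ffun x => g x] x) = g.
  by apply/funext => x; rewrite ffunE.
move=> Bw; exists ([ffun i => a i w], [ffun k => b k w]); rewrite /= !ffunK.
by split=> //; split=> ?; rewrite ffunE.
Qed.

End sigma_algebra_closure.

Lemma setI_eqP (T : Type) (A B C : set T) :
  A `&` C = B `&` C <-> (forall w, C w -> (A w <-> B w)).
Proof.
split=> [ABC w Cw|AB]; last by apply/seteqP; split=> w [h Cw]; split=> //; exact/(AB w Cw).
split=> [Aw|Bw]; first by have [] : (B `&` C) w by rewrite -ABC.
by have [] : (A `&` C) w by rewrite ABC.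
Qed.

Lemma ltn_sum_neq (X : finType) (a b : X -> nat) :
  (forall x, (a x <= b x)%N) -> a <> b -> (\sum_x a x < \sum_x b x)%N.
Proof.
move=> ab nab; have [x abx] : exists x, a x <> b x.
  by apply: contrapT => h; apply: nab; apply/funext => x; apply: contrapT => ne; apply: h; exists x.
rewrite (bigD1 x) //= [X in (_ < X)%N](bigD1 x) //=.
rewrite -addSn leq_add //; last exact: leq_sum.
by rewrite ltn_neqAle ab andbT; apply/eqP.
Qed.

(** * Right-constant paths *)

Section real_paths.
Variable R : realType.

Definition right_const (X : Type) (f : R -> X) (s : R) : Prop :=
  exists2 e, 0 < e & forall y, s <= y -> y < s + e -> f y = f s.

Lemma right_const_fun (X : finType) (Y : Type) (f : R -> X -> Y) (s : R) :
  (forall x, right_const (fun y => f y x) s) -> right_const f s.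
Proof.
move=> fr; suff [e e0 fe] : exists2 e, 0 < e &
    forall y, s <= y -> y < s + e -> forall x, x \in enum X -> f y x = f s x.
  by exists e => // y sy ys; apply/funext => x; apply: fe => //; rewrite mem_enum.
elim: (enum X) => [|x l [e e0 fe]]; first by exists 1.
have [ex ex0 fx] := fr x; exists (Num.min ex e); first by rewrite lt_min ex0.
move=> y sy ys z; rewrite in_cons => /orP[/eqP->|zl].
  by apply: fx => //; apply: lt_le_trans ys _; rewrite lerD2l ge_min lexx.
by apply: fe => //; apply: lt_le_trans ys _; rewrite lerD2l ge_min lexx orbT.
Qed.

Lemma right_const_scale (X : Type) (f : R -> X) (c x : R) :
  0 < c -> right_const f (c * x) -> right_const (fun y => f (c * y)) x.
Proof.
move=> c0 [e e0 fe]; exists (e / c); first by rewrite divr_gt0.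
move=> y xy ylt; apply: fe; first by rewrite ler_pM2l.
by move: ylt; rewrite -(ltr_pM2l c0) mulrDr mulrCA mulfV ?mulr1 // gt_eqF.
Qed.

Lemma le_add_of_dist_le (a b x y : R) :
  a <= b -> `|y - x| <= `|b - a| -> y <= x + (b - a).
Proof.
by move=> ab; rewrite (ger0_norm (_ : 0 <= b - a)) ?subr_ge0 // ler_norml => /andP[_]; lra.
Qed.

Lemma exists_rat_between (x y : R) : x < y -> exists q : rat, x < ratr q < y.
Proof. by move=> /rat_in_itvoo[q]; rewrite in_itv /= => h; exists q. Qed.

(* Countably many points of [0, b], dense in it and including [b]. *)
Definition clamp (b : R) (q : rat) : R := Num.max 0 (Num.min (ratr q) b).

Lemma clamp_ge0 (b : R) (q : rat) : 0 <= clamp b q.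
Proof. by rewrite /clamp le_max lexx. Qed.

Lemma clamp_range (b : R) (q : rat) : 0 <= b -> 0 <= clamp b q <= b.
Proof. by move=> b0; rewrite clamp_ge0 /clamp ge_max b0 ge_min lexx orbT. Qed.

Lemma clampE (b : R) (q : rat) : 0 <= (ratr q : R) <= b -> clamp b q = ratr q.
Proof. by case/andP=> q0 qb; rewrite /clamp (min_l qb) (max_r q0). Qed.

Lemma right_const_clamp (X : Type) (f : R -> X) (b x : R) :
  0 <= x <= b -> right_const f x -> exists q, x <= clamp b q /\ f (clamp b q) = f x.
Proof.
case/andP=> x0 xb [e e0 fe]; have [xb'|bx] := ltP x b; last first.
  have [q /andP[bq _]] := exists_rat_between (ltr_pwDr ltr01 (lexx b)).
  have xE : x = b by apply/eqP; rewrite eq_le xb bx.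
  by exists q; rewrite /clamp (min_r (ltW bq)) max_r -?xE.
have [q /andP[xq qb]] : exists q : rat, x < ratr q < Num.min (x + e) b.
  by apply: exists_rat_between; rewrite lt_min ltrDl e0 xb'.
move: qb; rewrite lt_min => /andP[qe qb].
have qE : clamp b q = ratr q by rewrite clampE // (ltW qb) (le_trans x0 (ltW xq)).
by exists q; rewrite qE (ltW xq); split=> //; apply: fe => //; exact: ltW.
Qed.

Lemma le_of_rat_left (g : R -> R) (a b c : R) : a < b ->
  (forall x, a < x -> x < b -> g b <= g x + (b - x)) ->
  (forall q : rat, a < ratr q -> ratr q < b -> g (ratr q) <= c) -> g b <= c.
Proof.
move=> ab glip gq; rewrite leNgt; apply/negP => cg.
have [q /andP[aq qb]] : exists q : rat, Num.max a (b - (g b - c)) < ratr q < b.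
  by apply: exists_rat_between; rewrite gt_max ab ltrBlDr ltrDl subr_gt0.
move: aq; rewrite gt_max => /andP[aq bq].
have := glip _ aq qb; have := gq q aq qb; lra.
Qed.

Lemma sup_le_of_lip (A : set R) (g : R -> R) u : has_sup A ->
  (forall e, A e -> g e <= u) -> (forall e, A e -> g (sup A) <= g e + (sup A - e)) ->
  g (sup A) <= u.
Proof.
move=> supA gu glip; rewrite leNgt; apply/negP => ug.
have eps0 : 0 < g (sup A) - u by rewrite subr_gt0.
have [e Ae me] := sup_adherent eps0 supA.
by have := glip e Ae; have := gu e Ae; move: me; lra.
Qed.

Lemma right_const_first_change (X : Type) (f : R -> X) (a t : R) : a <= t ->
  (forall s, a <= s -> right_const f s) ->
  exists rho, [/\ a < rho, (forall s, a <= s -> s < rho -> s <= t -> f s = f a)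
                 & (rho <= t -> f rho <> f a)].
Proof.
move=> at_ frc.
pose C := [set s | a <= s <= t /\ forall s', a <= s' -> s' <= s -> f s' = f a].
have Ca : C a by split=> [|s' as' s'a]; [rewrite lexx|rewrite (@le_anti _ _ s' a) ?as' ?s'a].
have supC : has_sup C by split; [exists a|exists t => s [/andP[]]].
set m := sup C.
have am : a <= m by exact: sup_upper_bound.
have mt : m <= t by apply: ge_sup; [exists a|move=> s [/andP[]]].
have const_lt_m : forall s, a <= s -> s < m -> f s = f a.
  move=> s as_ sm; have ms : 0 < m - s by rewrite subr_gt0.
  have [e [_ fe] me] := sup_adherent ms supC.
  by apply: fe => //; apply: ltW; rewrite opprB addrC subrK in me.
have [fm|fm] := pselect (f m = f a); last first.
  exists m; split=> // [|s as_ sm _]; last exact: const_lt_m.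
  by rewrite lt_neqAle am andbT; apply/eqP => am'; apply: fm; rewrite -am'.
have const_le_m : forall s, a <= s -> s <= m -> f s = f a.
  by move=> s as_; rewrite le_eqVlt => /orP[/eqP->|]; [|exact: const_lt_m].
have mtE : m = t.
  apply/eqP; rewrite eq_le mt leNgt; apply/negP => mlt.
  have [e e0 fe] := frc m am.
  pose m' := Num.min (m + e / 2) t.
  have mm' : m < m' by rewrite lt_min mlt andbT ltrDl divr_gt0.
  suff : m' <= m by rewrite leNgt mm'.
  apply: sup_upper_bound => //; split=> [|s as_ sm'].
    by rewrite (le_trans am (ltW mm')) ge_min lexx orbT.
  have [|ms] := leP s m; first exact: const_le_m.
  rewrite -fm; apply: fe; first exact: ltW.
  apply: le_lt_trans sm' _; rewrite gt_min ltrD2l; apply/orP; left.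
  by rewrite ltr_pdivrMr // ltr_pMr // ltr1n.
exists (t + 1); split=> [|s as_ _ st|]; first by rewrite (le_lt_trans at_) // ltrDl.
  by apply: const_le_m; rewrite ?mtE.
by rewrite leNgt ltrDl ltr01.
Qed.

End real_paths.

Section renewal_paths.
Variables (R : realType) (d : measure_display) (Omega : measurableType d).
Variables (P : probability Omega R) (N : R -> Omega -> nat).
Hypothesis renN : renewal_process P N.

Lemma renewal_process_mono w x y : 0 <= x -> x <= y -> (N x w <= N y w)%N.
Proof.
have [xi [_ _ _ _ Nxi]] := renN => x0 xy.
by rewrite (Nxi y w _ (le_trans x0 xy)) (le_trans _ xy) // -Nxi.
Qed.

(* The path stays constant until the next renewal epoch, which lies strictly
   beyond [x]. *)
Lemma renewal_process_right_const w x : 0 <= x -> right_const (N^~ w) x.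
Proof.
have [xi [_ _ _ _ Nxi]] := renN => x0; set m := N x w.
have xlt : x < \sum_(k < m.+1) xi k w by rewrite ltNge -(Nxi x w _ x0) ltnn.
exists (\sum_(k < m.+1) xi k w - x); first by rewrite subr_gt0.
move=> y xy; rewrite addrC subrK => ylt; apply/eqP.
rewrite eqn_leq (renewal_process_mono w x0 xy) andbT -ltnS ltnNge.
by rewrite (Nxi y w _ (le_trans x0 xy)) -ltNge.
Qed.

Lemma renewal_process_scaled_mono c w x y : 0 < c -> 0 <= x -> x <= y ->
  (N (c * x) w <= N (c * y) w)%N.
Proof.
move=> c0 x0 xy; apply: renewal_process_mono; first exact: (mulr_ge0 (ltW c0) x0).
by rewrite ler_pM2l.
Qed.

Lemma renewal_process_scaled_right_const c w x : 0 < c -> 0 <= x ->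
  right_const (fun y => N (c * y) w) x.
Proof.
move=> c0 x0; apply: (right_const_scale (f := N^~ w) c0).
exact: (renewal_process_right_const w (mulr_ge0 (ltW c0) x0)).
Qed.

End renewal_paths.

(** * The jump times of the departure process *)

Section stopping_time.
Variables (R : realType) (Omega : Type) (I K : finType) (J : {set (I * K)}).
Variables (lam : I -> R) (mu : I * K -> R).
Variables (Ach : I -> R -> Omega -> nat) (Sch : I * K -> R -> Omega -> nat).
Variables (Y : Type) (Ups : Omega -> Y) (borelY : set (set Y)).
Variables (T : I * K -> R -> Omega -> R) (t : R) (uI : I -> R) (uJ : I * K -> R).

Hypothesis t_ge0 : 0 <= t.
Hypothesis t_le_uI : forall i, t <= uI i.
Hypothesis uJ_ge0 : forall j, j \in J -> 0 <= uJ j.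
Hypothesis S_mono : forall j w x y, j \in J -> 0 <= x -> x <= y ->
  (S_n mu Sch j x w <= S_n mu Sch j y w)%N.
Hypothesis S_right_const : forall j w x, j \in J -> 0 <= x ->
  right_const (fun y => S_n mu Sch j y w) x.
Hypothesis T_mono : forall j w s s', j \in J -> 0 <= s -> s <= s' ->
  T j s w <= T j s' w.
Hypothesis T_lip : forall j w s s', j \in J -> 0 <= s -> s <= s' ->
  T j s' w <= T j s w + (s' - s).
Hypothesis T_at0 : forall j w, j \in J -> T j 0 w = 0.
Hypothesis T_meas : forall j s c, j \in J -> 0 <= s ->
  F_n J lam mu Ach Sch T Ups borelY s [set w | T j s w <= c].

Local Notation Gu := (G_n J lam mu Ach Sch Ups borelY uI uJ).
Local Notation Sn := (S_n mu Sch).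
Local Notation Dn := (D_n mu Sch T).

Let Gu_sigma : sigma_algebra setT Gu. Proof. exact: smallest_sigma_algebra. Qed.

Definition Avec s w : I -> nat := fun i => A_n lam Ach i s w.
Definition Dvec s w : I * K -> nat := fun j => if j \in J then Dn j s w else 0%N.

Definition T_le_u s : set Omega := [set w | forall j, j \in J -> T j s w <= uJ j].

Definition D_const (tau : Omega -> R) s : set Omega :=
  [set w | forall s', tau w <= s' -> s' <= s -> Dvec s' w = Dvec (tau w) w].

Definition F_stopped (tau : Omega -> R) : set (set Omega) := <<s
  [set E | exists s1 s2 (B : set ((I -> nat) * (I * K -> nat))),
     [/\ 0 <= s1 <= t, 0 <= s2 <= t &
         E = (fun w => (Avec s1 w, Dvec (Num.min s2 (tau w)) w)) @^-1` B]]
  `|` [set E | exists s, 0 <= s <= t /\ E = [set w | tau w <= s]]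
  `|` [set Ups @^-1` B | B in borelY] >>.

Definition good_stage (tau : Omega -> R) (W : set Omega) := [/\ Gu W,
  (forall w, W w -> 0 <= tau w <= t /\ T_le_u (tau w) w) &
  (forall E, F_stopped tau E -> Gu (E `&` W))].

Definition window (tau : Omega -> R) (W : set Omega) s : set Omega :=
  W `&` D_const tau s `&` T_le_u s.

Lemma Gu_Avec s (B : set (I -> nat)) : 0 <= s <= t -> Gu [set w | B (Avec s w)].
Proof.
case/andP=> s0 st; apply: sub_sigma_algebra; left.
exists (fun _ => s), (fun _ => 0), [set p | B p.1]; split=> //.
by split=> [i|j jJ]; [exact: le_trans st (t_le_uI i)|exact: uJ_ge0].
Qed.

Lemma Gu_S j x (B : set nat) : j \in J -> 0 <= x <= uJ j -> Gu [set w | B (Sn j x w)].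
Proof.
move=> jJ /andP[x0 xu]; pose vJ j' := if j' == j then x else 0.
have -> : [set w | B (Sn j x w)] =
    S_vec J lam mu Ach Sch (fun _ => 0) vJ @^-1` [set p | B (p.2 j)].
  by apply/seteqP; split=> w /=; rewrite /vJ jJ eqxx.
apply: sub_sigma_algebra; left; exists (fun _ => 0), vJ, [set p | B (p.2 j)].
split=> //; first by split=> [i|j' _]; rewrite /vJ //; case: eqP.
split=> [i|j' j'J]; first exact: le_trans t_ge0 (t_le_uI i).
by rewrite /vJ; case: eqP => [->//|_]; exact: uJ_ge0.
Qed.

Lemma Gu_Ups B : borelY B -> Gu (Ups @^-1` B).
Proof. by move=> hB; apply: sub_sigma_algebra; right; exists B. Qed.

Lemma T_ge0 j w s : j \in J -> 0 <= s -> 0 <= T j s w.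
Proof. by move=> jJ s0; rewrite -(T_at0 w jJ); exact: T_mono. Qed.

Lemma Dn_mono j w s s' : j \in J -> 0 <= s -> s <= s' -> (Dn j s w <= Dn j s' w)%N.
Proof. by move=> jJ s0 ss'; apply: S_mono => //; [exact: T_ge0|exact: T_mono]. Qed.

Lemma Dvec_mono w s s' : 0 <= s -> s <= s' -> forall j, (Dvec s w j <= Dvec s' w j)%N.
Proof. by move=> s0 ss' j; rewrite /Dvec; case: ifP => // jJ; exact: Dn_mono. Qed.

Lemma Dvec_right_const w s : 0 <= s -> right_const (Dvec^~ w) s.
Proof.
move=> s0; apply: right_const_fun => j; rewrite /Dvec.
have [jJ|njJ] := boolP (j \in J); last by exists 1.
have [e e0 Se] := S_right_const w jJ (T_ge0 w jJ s0).
exists e => // y sy ys; apply: Se; first exact: T_mono.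
by apply: le_lt_trans (T_lip w jJ s0 sy) _; rewrite ltrD2l ltrBlDl.
Qed.

Lemma Dvec_eqE j w s s' : j \in J -> Dvec s w = Dvec s' w -> Dn j s w = Dn j s' w.
Proof. by move=> jJ /(congr1 (fun f => f j)); rewrite /Dvec jJ. Qed.

Lemma Dvec_neqP w s s' : Dvec s w <> Dvec s' w -> exists2 j, j \in J & Dn j s w <> Dn j s' w.
Proof.
move=> ne; apply: contrapT => nj; apply: ne; apply/funext => j; rewrite /Dvec.
by case: ifP => // jJ; apply: contrapT => nD; apply: nj; exists j.
Qed.

Lemma Dvec_min_D_const tau s s' w : D_const tau s w -> s' <= s ->
  Dvec (Num.min s' (tau w)) w = Dvec s' w.
Proof. by move=> Dw s's; case: (leP (tau w) s') => // ts'; rewrite (Dw s'). Qed.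

Lemma sigma_Dvec_level (A : set (set Omega)) (SA : sigma_algebra setT A)
    (s : Omega -> R) j n :
  (j \in J -> A [set w | Dn j (s w) w = n]) -> A [set w | Dvec (s w) w j = n].
Proof.
by rewrite /Dvec; case: (boolP (j \in J)) => _ An; [exact: An|exact: sigma_cst].
Qed.

Lemma next_jump_ex (tau : Omega -> R) w : exists rho : R, 0 <= tau w <= t ->
  [/\ tau w < rho,
      (forall s, tau w <= s -> s < rho -> s <= t -> Dvec s w = Dvec (tau w) w) &
      (rho <= t -> Dvec rho w <> Dvec (tau w) w)].
Proof.
have [/andP[tau0 taut]|] := boolP (0 <= tau w <= t); last by exists 0.
have [rho rhoP] := right_const_first_change taut
  (fun s ts => Dvec_right_const w (le_trans tau0 ts)).
by exists rho.
Qed.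

Definition next_jump tau w := proj1_sig (cid (next_jump_ex tau w)).

Lemma next_jumpP tau w : 0 <= tau w <= t ->
  [/\ tau w < next_jump tau w,
      (forall s, tau w <= s -> s < next_jump tau w -> s <= t -> Dvec s w = Dvec (tau w) w) &
      (next_jump tau w <= t -> Dvec (next_jump tau w) w <> Dvec (tau w) w)].
Proof. exact: proj2_sig (cid (next_jump_ex tau w)). Qed.

Lemma D_constP tau w s : 0 <= tau w <= t -> s <= t ->
  D_const tau s w <-> s < next_jump tau w.
Proof.
move=> taut st; have [taun const jump] := next_jumpP taut; split=> [Dc|sn s' ts' s's].
  by rewrite ltNge; apply/negP => ns; apply: jump (le_trans ns st) _; apply: Dc => //; exact: ltW.
by apply: const => //; [exact: le_lt_trans s's sn|exact: le_trans s's st].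
Qed.

Lemma F_stopped_sigma tau : sigma_algebra setT (F_stopped tau).
Proof. exact: smallest_sigma_algebra. Qed.

(* Before [D] changes value after [tau], the observations up to time [s]
   coincide with those of the process stopped at [tau]. *)
Lemma F_stopped_trace tau s : 0 <= s <= t ->
  forall E, F_n J lam mu Ach Sch T Ups borelY s E ->
  exists2 E', F_stopped tau E' & E `&` D_const tau s = E' `&` D_const tau s.
Proof.
move=> /andP[s0 st].
pose C := [set E | exists2 E', F_stopped tau E' & E `&` D_const tau s = E' `&` D_const tau s].
have C_sigma : sigma_algebra setT C.
  split=> [|E [E' FE' /setI_eqP EE']|F FC].
  - by exists set0; first exact: sigma_set0 (F_stopped_sigma tau).
  - exists (~` E'); first exact: (sigma_setC (F_stopped_sigma tau) FE').
    rewrite setTD; apply/setI_eqP => w Dw /=.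
    by split=> nE ?; apply: nE; apply/(EE' w Dw).
  - have /choice[G FG] : forall n, exists G,
        F_stopped tau G /\ F n `&` D_const tau s = G `&` D_const tau s.
      by move=> n; have [G ? ?] := FC n; exists G.
    exists (\bigcup_n G n); first exact: (sigma_bigcup (F_stopped_sigma tau) (fun n => (FG n).1)).
    by rewrite !setI_bigcupl; apply: eq_bigcupr => n _; case: (FG n).
apply: (smallest_sub C_sigma) => E [[s' [B [/andP[s'0 s's] ->]]]|[B hB <-]].
  exists ((fun w => (Avec s' w, Dvec (Num.min s' (tau w)) w)) @^-1` B).
    by apply: sub_sigma_algebra; left; left; exists s', s', B; rewrite s'0 (le_trans s's st).
  by apply/setI_eqP => w Dw /=; rewrite (Dvec_min_D_const Dw s's).
by exists (Ups @^-1` B) => //; apply: sub_sigma_algebra; right; exists B.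
Qed.

Lemma good_stage0 : good_stage (fun _ => 0) setT.
Proof.
split=> [|w _|E]; first exact: sigma_setT.
  by rewrite lexx t_ge0; split=> // j jJ; rewrite T_at0 // uJ_ge0.
rewrite setIT; move: E; apply: smallest_sub => // E.
move=> [[[s1 [s2 [B [/andP[s10 s1t] /andP[s20 s2t] ->]]]]|[s [_ ->]]]|[B hB <-]].
- apply: (sigma_nat_families Gu_sigma (a := fun i w => Avec s1 w i)
    (b := fun j w => Dvec (Num.min s2 0) w j)) => [i n|j n].
    by apply: (Gu_Avec [set f | f i = n]); rewrite s10.
  apply: (sigma_Dvec_level Gu_sigma (s := fun _ => Num.min s2 0)) => jJ.
  have -> : [set w | Dn j (Num.min s2 0) w = n] = [set w | Sn j 0 w = n].
    by apply/seteqP; split=> w; rewrite /= /Dn /D_n (min_r s20) T_at0.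
  by apply: (Gu_S [set m | m = n]); rewrite // lexx uJ_ge0.
- exact: sigma_cst.
- exact: Gu_Ups.
Qed.

Lemma T_le_stopped tau : exists E' : I * K -> R -> R -> set Omega,
  forall j s c, j \in J -> 0 <= s <= t -> F_stopped tau (E' j s c) /\
    [set w | T j s w <= c] `&` D_const tau s = E' j s c `&` D_const tau s.
Proof.
have /choice[E' E'P] : forall x : I * K * R * R, exists E', x.1.1 \in J -> 0 <= x.1.2 <= t ->
    F_stopped tau E' /\
    [set w | T x.1.1 x.1.2 w <= x.2] `&` D_const tau x.1.2 = E' `&` D_const tau x.1.2.
  move=> [[j s] c] /=; have [[jJ st]|nJs] := pselect (j \in J /\ 0 <= s <= t).
    by have [E' ? ?] := F_stopped_trace tau st (T_meas c jJ (andP st).1); exists E'.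
  by exists set0 => jJ st; case: nJs.
by exists (fun j s c => E' (j, s, c)) => j s c; exact: (E'P (j, s, c)).
Qed.

Definition next_stage (tau : Omega -> R) (W : set Omega) : set Omega :=
  W `&` [set w | next_jump tau w <= t /\ T_le_u (next_jump tau w) w].

Section stage.
Variables (tau : Omega -> R) (W : set Omega).
Hypothesis good : good_stage tau W.

Let W_Gu : Gu W. Proof. by case: good. Qed.

Let tau_good w : W w -> 0 <= tau w <= t /\ T_le_u (tau w) w.
Proof. by move=> Ww; case: good => _ /(_ w Ww). Qed.

Let tau_range w : W w -> 0 <= tau w <= t.
Proof. by case/tau_good. Qed.

Let F_stopped_Gu E : F_stopped tau E -> Gu (E `&` W).
Proof. by case: good => _ _; apply. Qed.

Let GuW := [set E | Gu (E `&` W)].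

Let GuW_sigma : sigma_algebra setT GuW.
Proof. exact: (sigma_algebra_trace Gu_sigma W_Gu). Qed.

Let GuW_Gu E : Gu E -> GuW E.
Proof. by move=> GE; exact: (sigma_setI Gu_sigma GE W_Gu). Qed.

Lemma Gu_D_tau j n : j \in J -> Gu ([set w | Dn j (tau w) w = n] `&` W).
Proof.
move=> jJ; have -> : [set w | Dn j (tau w) w = n] `&` W =
    (fun w => (Avec 0 w, Dvec (Num.min t (tau w)) w)) @^-1` [set p | p.2 j = n] `&` W.
  by apply/setI_eqP => w /tau_range/andP[_ taut]; rewrite /= /Dvec jJ (min_r taut).
apply: F_stopped_Gu; apply: sub_sigma_algebra; left; left.
by exists 0, t, [set p | p.2 j = n]; rewrite !lexx t_ge0.
Qed.

Lemma Gu_S_le_D_tau j x : j \in J -> 0 <= x <= uJ j ->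
  Gu ([set w | (Sn j x w <= Dn j (tau w) w)%N] `&` W).
Proof.
move=> jJ xu; have -> : [set w | (Sn j x w <= Dn j (tau w) w)%N] =
    [set w | exists n, (Sn j x w <= n)%N /\ Dn j (tau w) w = n].
  by apply/seteqP; split=> w /= => [|[n [? ->]] //]; exists (Dn j (tau w) w).
apply: (sigma_exists GuW_sigma) => n; apply: (sigma_setI GuW_sigma).
  by apply: GuW_Gu; exact: (Gu_S [set m | (m <= n)%N]).
exact: Gu_D_tau.
Qed.

Section window_measurable.
Variables (s : R) (E' : I * K -> R -> R -> set Omega).
Hypothesis s_range : 0 <= s <= t.
Hypothesis E'P : forall j s' c, j \in J -> 0 <= s' <= t -> F_stopped tau (E' j s' c) /\
  [set w | T j s' w <= c] `&` D_const tau s' = E' j s' c `&` D_const tau s'.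

Let E'_iff j s' c w : j \in J -> 0 <= s' <= t -> D_const tau s' w ->
  T j s' w <= c <-> E' j s' c w.
Proof. by move=> jJ s't; case: (E'P c jJ s't) => _ /setI_eqP; apply. Qed.

(* On [W], the window at [s] is cut out by these three countable conditions:
   [Ca] is [T(s) <= u]; [Cb] says that the service performed by time [s],
   read off [S] on [0, u], does not exceed [D(tau)]; [Cc] transfers bounds on
   [T(s)] to earlier rational times, which rules out a jump of [D] before [s]. *)
Let Ca := [set w | forall j, j \in J -> E' j s (uJ j) w].
Let Cb := [set w | forall j, j \in J -> exists q : rat,
  E' j s (clamp (uJ j) q) w /\ (Sn j (clamp (uJ j) q) w <= Dn j (tau w) w)%N].
Let Cc := [set w | forall j, j \in J -> forall q1 : rat, 0 <= (ratr q1 : R) < s ->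
  forall q : rat, tau w <= ratr q1 -> E' j s (clamp (uJ j) q) w ->
  E' j (ratr q1) (clamp (uJ j) q) w].

Lemma window_sub : window tau W s `<=` Ca `&` Cb `&` Cc.
Proof.
move=> w [[Ww Dw] Tw]; have /andP[s0 st] := s_range; split; first split.
- by move=> j jJ; apply/(E'_iff _ jJ s_range Dw); exact: Tw.
- move=> j jJ; have Tu : 0 <= T j s w <= uJ j by rewrite T_ge0 // Tw.
  have [q [Tq Sq]] := right_const_clamp Tu (S_right_const w jJ (T_ge0 w jJ s0)).
  exists q; split; first exact/(E'_iff _ jJ s_range Dw).
  rewrite Sq; change (Dn j s w <= Dn j (tau w) w)%N.
  have [ts|st'] := leP (tau w) s; first by rewrite (Dvec_eqE jJ (Dw s ts (lexx s))).
  exact: Dn_mono (ltW st').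
- move=> j jJ q1 /andP[q10 q1s] q tq1 Eq.
  have q1t : 0 <= (ratr q1 : R) <= t by rewrite q10 (le_trans (ltW q1s) st).
  have Dq1 : D_const tau (ratr q1) w.
    by move=> s' ? ?; apply: Dw => //; exact: le_trans (ltW q1s).
  apply/(E'_iff _ jJ q1t Dq1); apply: le_trans (T_mono w jJ q10 (ltW q1s)) _.
  exact/(E'_iff _ jJ s_range Dw).
Qed.

Lemma window_sup : Ca `&` Cb `&` Cc `&` W `<=` window tau W s.
Proof.
move=> w [[[Caw Cbw] Ccw] Ww]; have /andP[s0 st] := s_range.
have taut := tau_range Ww; have /andP[tau0 _] := taut.
suff Dw : D_const tau s w by split=> // j jJ; apply/(E'_iff _ jJ s_range Dw); exact: Caw.
apply/(D_constP taut st); rewrite ltNge; apply/negP => ns.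
have [taun _ jump] := next_jumpP taut; set n := next_jump tau w in taun jump ns *.
have n0 : 0 <= n by exact: le_trans tau0 (ltW taun).
have [j jJ Dj] := Dvec_neqP (jump (le_trans ns st)).
have [q [Eq Sq]] := Cbw j jJ.
have Tn : T j n w <= clamp (uJ j) q.
  apply: (le_of_rat_left (g := fun x => T j x w) taun) => [x taux xn|q1 tq1 q1n].
    by apply: T_lip => //; [exact: le_trans tau0 (ltW taux)|exact: ltW].
  have q1t : 0 <= (ratr q1 : R) <= t.
    by rewrite (le_trans tau0 (ltW tq1)) (le_trans (ltW q1n) (le_trans ns st)).
  have Dq1 : D_const tau (ratr q1) w by apply/(D_constP taut (andP q1t).2).
  apply/(E'_iff _ jJ q1t Dq1); apply: Ccw (ltW tq1) Eq => //.
  by rewrite (andP q1t).1 (lt_le_trans q1n ns).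
apply: Dj; apply/eqP; rewrite eqn_leq (Dn_mono w jJ tau0 (ltW taun)) andbT.
by apply: leq_trans Sq; apply: S_mono Tn => //; exact: T_ge0.
Qed.

Lemma Gu_window : Gu (window tau W s).
Proof.
have -> : window tau W s = Ca `&` Cb `&` Cc `&` W.
  apply/seteqP; split=> [w ww|]; last exact: window_sup.
  by split; [exact: window_sub|case: ww => -[]].
change (GuW (Ca `&` Cb `&` Cc)); have /andP[s0 st] := s_range.
have E'_GuW j s' c : j \in J -> 0 <= s' <= t -> GuW (E' j s' c).
  by move=> jJ s't; exact: F_stopped_Gu (E'P c jJ s't).1.
apply: (sigma_setI GuW_sigma); first apply: (sigma_setI GuW_sigma).
- by apply: (sigma_forall_in GuW_sigma) => j jJ; exact: E'_GuW.
- apply: (sigma_forall_in GuW_sigma) => j jJ; apply: (sigma_exists GuW_sigma) => q.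
  apply: (sigma_setI GuW_sigma); first exact: E'_GuW.
  by apply: Gu_S_le_D_tau => //; exact/clamp_range/uJ_ge0.
- apply: (sigma_forall_in GuW_sigma) => j jJ.
  apply: (sigma_forall_in GuW_sigma) => q1 /andP[q10 q1s].
  have q1t : 0 <= (ratr q1 : R) <= t by rewrite q10 (le_trans (ltW q1s) st).
  apply: (sigma_forall GuW_sigma) => q; apply: (sigma_imply GuW_sigma).
    by apply: F_stopped_Gu; apply: sub_sigma_algebra; left; right; exists (ratr q1).
  by apply: (sigma_imply GuW_sigma); exact: E'_GuW.
Qed.

Lemma Gu_T_window j c : j \in J -> Gu ([set w | T j s w <= c] `&` window tau W s).
Proof.
move=> jJ; have -> : [set w | T j s w <= c] `&` window tau W s =
    (E' j s c `&` W) `&` window tau W s.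
  apply/setI_eqP => w [[Ww Dw] _] /=; split=> [Tc|[Ew _]]; [split=> //|];
  exact/(E'_iff _ jJ s_range Dw).
exact: (sigma_setI Gu_sigma (F_stopped_Gu (E'P c jJ s_range).1) Gu_window).
Qed.

End window_measurable.

Lemma Gu_stage_window s : 0 <= s <= t -> Gu (window tau W s) /\
  forall j c, j \in J -> Gu ([set w | T j s w <= c] `&` window tau W s).
Proof.
move=> st; have [E' E'P] := T_le_stopped tau.
by split=> [|j c jJ]; [exact: (Gu_window st E'P)|exact: (Gu_T_window st E'P)].
Qed.

Let W_next := next_stage tau W.

Lemma windowP w s : W w -> 0 <= s <= t ->
  window tau W s w <-> s < next_jump tau w /\ T_le_u s w.
Proof.
move=> Ww /andP[_ st]; have DP := D_constP (tau_range Ww) st.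
by split=> [[[_ /DP ?] ?]|[/DP ? ?]].
Qed.

Lemma W_next_tau_lt w : W_next w -> tau w < next_jump tau w.
Proof. by move=> [Ww _]; case: (next_jumpP (tau_range Ww)). Qed.

Lemma W_next_windowP w s : W_next w -> 0 <= s <= t -> window tau W s w <-> s < next_jump tau w.
Proof.
move=> Wnw st; have [Ww [nt Tn]] := Wnw; split=> [/(windowP Ww st)[]//|sn].
apply/(windowP Ww st); split=> // j jJ; apply: le_trans (Tn j jJ).
by apply: T_mono (ltW sn) => //; case/andP: st.
Qed.

(* On [W_next], [T_before j c] means [T_j(next_jump) <= c] and [D_next_le j n]
   means [D_j(next_jump) <= n]; both are countable combinations of events
   already known to lie in [G_u] on [W]. *)
Let T_before j c w :=
  forall q : rat, window tau W (clamp t q) w -> T j (clamp t q) w <= c.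
Let D_next_le j n w := exists q : rat,
  T_before j (clamp (uJ j) q) w /\ (Sn j (clamp (uJ j) q) w <= n)%N.

Lemma T_beforeP w j c : W_next w -> j \in J ->
  T_before j c w <-> T j (next_jump tau w) w <= c.
Proof.
move=> Wnw jJ; have [Ww [nt _]] := Wnw; have /andP[tau0 _] := tau_range Ww.
have taun := W_next_tau_lt Wnw.
split=> [Tb|Tc q /(W_next_windowP Wnw (clamp_range q t_ge0)) qn].
  apply: (le_of_rat_left (g := fun x => T j x w) taun) => [x taux xn|q tq qn].
    by apply: T_lip => //; [exact: le_trans tau0 (ltW taux)|exact: ltW].
  have qt : 0 <= (ratr q : R) <= t by rewrite (le_trans tau0 (ltW tq)) (le_trans (ltW qn) nt).
  by rewrite -(clampE qt); apply: Tb; rewrite (clampE qt); apply/(W_next_windowP Wnw qt).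
by apply: le_trans Tc; apply: T_mono (ltW qn) => //; exact: clamp_ge0.
Qed.

Lemma D_next_leP w j n : W_next w -> j \in J ->
  D_next_le j n w <-> (Dn j (next_jump tau w) w <= n)%N.
Proof.
move=> Wnw jJ; have [Ww [_ Tn]] := Wnw; have /andP[tau0 _] := tau_range Ww.
have T0 := T_ge0 w jJ (le_trans tau0 (ltW (W_next_tau_lt Wnw))).
split=> [[q [/(T_beforeP _ Wnw jJ) Tq Sq]]|Dle].
  by apply: leq_trans Sq; exact: (S_mono w jJ T0 Tq).
have Tu : 0 <= T j (next_jump tau w) w <= uJ j by rewrite T0 Tn.
have [q [Tq Sq]] := right_const_clamp Tu (S_right_const w jJ T0).
by exists q; split; [apply/(T_beforeP _ Wnw jJ)|rewrite Sq].
Qed.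

Lemma Gu_T_before j c : j \in J -> Gu (T_before j c `&` W).
Proof.
move=> jJ; change (GuW (T_before j c)); apply: (sigma_forall GuW_sigma) => q.
have [Gwin GTwin] := Gu_stage_window (clamp_range q t_ge0).
by apply: (sigma_imply_on GuW_sigma); apply: GuW_Gu; [exact: Gwin|exact: GTwin].
Qed.

Lemma Gu_D_next_le j n : j \in J -> Gu (D_next_le j n `&` W).
Proof.
move=> jJ; change (GuW (D_next_le j n)); apply: (sigma_exists GuW_sigma) => q.
apply: (sigma_setI GuW_sigma); first exact: Gu_T_before.
by apply: GuW_Gu; apply: (Gu_S [set m | (m <= n)%N]) => //; exact/clamp_range/uJ_ge0.
Qed.

(* The supremum [m] of the window times still lies in the window, so [T(m)]
   witnesses [D_next_le], with [D_j(m) = D_j(tau)]. *)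
Lemma D_next_le_no_jump w j : W w -> j \in J ->
  ~ (next_jump tau w <= t /\ T_le_u (next_jump tau w) w) ->
  D_next_le j (Dn j (tau w) w) w.
Proof.
move=> Ww jJ nojump; have [taut Ttau] := tau_good Ww; have /andP[tau0 _] := taut.
have [taun _ _] := next_jumpP taut.
pose A := [set s | 0 <= s <= t /\ window tau W s w].
have Atau : A (tau w) by split=> //; apply/(windowP Ww taut).
have supA : has_sup A by split; [exists (tau w)|exists t => s [/andP[]]].
set m := sup A; have Am s : A s -> s <= m by move=> As; exact: sup_upper_bound.
have mt : m <= t by apply: ge_sup; [exists (tau w)|move=> s [/andP[]]].
have m0 : 0 <= m := le_trans tau0 (Am _ Atau).
have Tm : T_le_u m w.
  move=> j' j'J; apply: (sup_le_of_lip (g := fun x => T j' x w) supA) => e Ae.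
    by case: Ae => est /(windowP Ww est)[_]; apply.
  by case: (Ae) => /andP[e0 _] _; exact: (T_lip w j'J e0 (Am _ Ae)).
have mn : m < next_jump tau w.
  rewrite ltNge; apply/negP => nm; apply: nojump; split; first exact: le_trans nm mt.
  move=> j' j'J; apply: le_trans (Tm j' j'J); apply: T_mono nm => //.
  exact: le_trans tau0 (ltW taun).
have mrange : 0 <= m <= t by rewrite m0 mt.
have [[_ Dm] _] : window tau W m w by apply/(windowP Ww mrange).
have Tu : 0 <= T j m w <= uJ j by rewrite T_ge0 // Tm.
have [q [Tq Sq]] := right_const_clamp Tu (S_right_const w jJ (T_ge0 w jJ m0)).
exists q; split.
  move=> q' wq'; have q'm := Am _ (conj (clamp_range q' t_ge0) wq').
  by apply: le_trans Tq; apply: T_mono q'm => //; exact: clamp_ge0.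
rewrite Sq; change (Dn j m w <= Dn j (tau w) w)%N.
by rewrite (Dvec_eqE jJ (Dm m (Am _ Atau) (lexx m))).
Qed.

Let jumped := [set w | exists j, j \in J /\ ~ D_next_le j (Dn j (tau w) w) w].

Lemma W_nextE : W_next = jumped `&` W.
Proof.
apply/seteqP; split=> [w Wnw|w [[j [jJ nD]] Ww]]; last first.
  by split=> //; apply: contrapT => nWn; exact: nD (D_next_le_no_jump Ww jJ nWn).
have [Ww [nt _]] := Wnw; split=> //; have taut := tau_range Ww.
have [taun _ jump] := next_jumpP taut; have /andP[tau0 _] := taut.
have [j jJ Dj] := Dvec_neqP (jump nt); exists j; split=> // /(D_next_leP _ Wnw jJ) Dle.
by apply: Dj; apply/eqP; rewrite eqn_leq Dle (Dn_mono w jJ tau0 (ltW taun)).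
Qed.

Lemma Gu_W_next : Gu W_next.
Proof.
rewrite W_nextE; change (GuW jumped); apply: (sigma_exists_in GuW_sigma) => j jJ.
apply: (sigma_setC GuW_sigma).
have -> : (fun w => D_next_le j (Dn j (tau w) w) w) =
    [set w | exists n, Dn j (tau w) w = n /\ D_next_le j n w].
  by apply/seteqP; split=> w /= => [|[n [-> //]]]; exists (Dn j (tau w) w).
apply: (sigma_exists GuW_sigma) => n; apply: (sigma_setI GuW_sigma).
  exact: Gu_D_tau.
exact: Gu_D_next_le.
Qed.

Let GuWn := [set E | Gu (E `&` W_next)].

Let GuWn_sigma : sigma_algebra setT GuWn.
Proof. exact: (sigma_algebra_trace Gu_sigma Gu_W_next). Qed.

Let GuW_GuWn E : GuW E -> GuWn E.
Proof.
move=> GE; change (Gu (E `&` W_next)); have -> : E `&` W_next = (E `&` W) `&` W_next.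
  by apply/seteqP; split=> w [Ew Wnw]; split=> //; [split=> //; case: Wnw|case: Ew].
exact: (sigma_setI Gu_sigma GE Gu_W_next).
Qed.

Lemma Gu_D_next j n : j \in J -> Gu ([set w | Dn j (next_jump tau w) w = n] `&` W_next).
Proof.
move=> jJ; have -> : [set w | Dn j (next_jump tau w) w = n] `&` W_next =
    [set w | D_next_le j n w /\ forall m, (m < n)%N -> ~ D_next_le j m w] `&` W_next.
  apply/setI_eqP => w Wnw /=; have DP := D_next_leP _ Wnw jJ.
  split=> [<-|[/DP le lt]].
    by split=> [|m mlt /DP]; [exact/DP|rewrite leqNgt mlt].
  apply/eqP; rewrite eqn_leq le /= leqNgt; apply/negP => ltn.
  exact: (lt _ ltn ((DP _).2 (leqnn _))).
change (GuWn [set w | D_next_le j n w /\ forall m, (m < n)%N -> ~ D_next_le j m w]).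
apply: (sigma_setI GuWn_sigma); first by apply: GuW_GuWn; exact: Gu_D_next_le.
apply: (sigma_forall GuWn_sigma) => m; apply: (sigma_imply GuWn_sigma).
  exact: sigma_cst.
by apply: (sigma_setC GuWn_sigma); apply: GuW_GuWn; exact: Gu_D_next_le.
Qed.

Lemma Gu_stopped_next s1 s2 (B : set ((I -> nat) * (I * K -> nat))) :
  0 <= s1 <= t -> 0 <= s2 <= t ->
  Gu ((fun w => (Avec s1 w, Dvec (Num.min s2 (next_jump tau w)) w)) @^-1` B `&` W_next).
Proof.
move=> s1t s2t; set P := _ @^-1` B; set win := window tau W s2.
pose P1 := (fun w => (Avec s1 w, Dvec (Num.min s2 (tau w)) w)) @^-1` B.
pose P2 := [set w | B (Avec s1 w, Dvec (next_jump tau w) w)].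
have -> : P `&` W_next = (P1 `&` win `|` P2 `&` ~` win) `&` W_next.
  apply/setI_eqP => w Wnw; have [win_w|nwin_w] := pselect (win w).
    have s2n := (W_next_windowP Wnw s2t).1 win_w.
    rewrite /P /= (min_l (ltW s2n)) -(Dvec_min_D_const win_w.1.2 (lexx s2)).
    by split=> [BP|[[]//|[_ /(_ win_w)[]]]]; left.
  have ns2 : next_jump tau w <= s2.
    by rewrite leNgt; apply/negP => /(W_next_windowP Wnw s2t).
  by rewrite /P /= (min_r ns2); split=> [BP|[[_ /nwin_w[]]|[]//]]; right.
change (GuWn (P1 `&` win `|` P2 `&` ~` win)).
have Gwin : GuWn win by apply: GuW_GuWn; apply: GuW_Gu; exact: (Gu_stage_window s2t).1.
apply: (sigma_setU GuWn_sigma); apply: (sigma_setI GuWn_sigma) => //.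
- apply: GuW_GuWn; apply: F_stopped_Gu; apply: sub_sigma_algebra; left; left.
  by exists s1, s2, B.
- apply: (sigma_nat_families GuWn_sigma (a := fun i w => Avec s1 w i)
    (b := fun j w => Dvec (next_jump tau w) w j)) => [i n|j n].
    by apply: GuW_GuWn; apply: GuW_Gu; exact: (Gu_Avec [set f | f i = n]).
  by apply: (sigma_Dvec_level GuWn_sigma (s := next_jump tau)) => jJ; exact: Gu_D_next.
- exact: (sigma_setC GuWn_sigma Gwin).
Qed.

Lemma good_stage_next : good_stage (next_jump tau) W_next.
Proof.
split=> [|w Wnw|]; first exact: Gu_W_next.
  have [Ww [nt Tn]] := Wnw; have /andP[tau0 _] := tau_range Ww.
  by rewrite nt (le_trans tau0 (ltW (W_next_tau_lt Wnw))).
apply: (smallest_sub GuWn_sigma) => E.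
move=> [[[s1 [s2 [B [s1t s2t ->]]]]|[s [st ->]]]|[B hB <-]].
- exact: Gu_stopped_next.
- change (Gu ([set w | next_jump tau w <= s] `&` W_next)).
  have -> : [set w | next_jump tau w <= s] `&` W_next = ~` window tau W s `&` W_next.
    apply/setI_eqP => w Wnw /=; rewrite leNgt.
    split=> [/negP sn win|nwin]; first exact/sn/(W_next_windowP Wnw st).
    by apply/negP => /(W_next_windowP Wnw st).
  change (GuWn (~` window tau W s)); apply: (sigma_setC GuWn_sigma).
  by apply: GuW_GuWn; apply: GuW_Gu; exact: (Gu_stage_window st).1.
- by apply: GuW_GuWn; apply: GuW_Gu; exact: Gu_Ups.
Qed.

End stage.

Fixpoint stage k : (Omega -> R) * set Omega :=
  if k is k'.+1 then
    let: (tau, W) := stage k' in (next_jump tau, next_stage tau W)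
  else (fun _ => 0, setT).

Lemma good_stage_iter k : good_stage (stage k).1 (stage k).2.
Proof.
elim: k => [|k]; first exact: good_stage0.
by rewrite /=; case: (stage k) => tau W /good_stage_next.
Qed.

(* [D] jumps at every stage, so the total count [\sum_j D_j] strictly
   increases; as it is bounded by its value at [t], some stage reaches [t]. *)
Lemma stage_exhaust w : T_le_u t w -> exists k, window (stage k).1 (stage k).2 t w.
Proof.
move=> Tt; pose M s := (\sum_j Dvec s w j)%N.
suff stage_count k : (exists k', window (stage k').1 (stage k').2 t w) \/
    ((stage k).2 w /\ (k <= M ((stage k).1 w))%N).
  have [//|[Wk kM]] := stage_count (M t).+1.
  have [_ /(_ w Wk)[/andP[tau0 taut] _] _] := good_stage_iter (M t).+1.
  have : (M ((stage (M t).+1).1 w) <= M t)%N by apply: leq_sum => j _; exact: Dvec_mono.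
  by move/(leq_trans kM); rewrite ltnn.
elim: k => [|k [|[Wk kM]]]; [by right|by left|].
have [_ /(_ w Wk)[taut _] _] := good_stage_iter k.
have [Dt|nDt] := pselect (D_const (stage k).1 t w); first by left; exists k.
right; rewrite /=; case: (stage k) taut nDt Wk kM => tau W /= taut nDt Wk kM.
have nt : next_jump tau w <= t.
  by rewrite leNgt; apply/negP => /(D_constP taut (lexx t)).
have [taun _ jump] := next_jumpP taut; have /andP[tau0 _] := taut.
have Tn : T_le_u (next_jump tau w) w.
  move=> j jJ; apply: le_trans (Tt j jJ).
  by apply: T_mono nt => //; exact: le_trans tau0 (ltW taun).
split; first by split.
apply: leq_ltn_trans kM _; apply: ltn_sum_neq (Dvec_mono w tau0 (ltW taun)) _.
by move=> /esym; exact: jump.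
Qed.

Lemma Gu_T_le_u : Gu (T_le_u t).
Proof.
have -> : T_le_u t = \bigcup_k window (stage k).1 (stage k).2 t.
  by apply/seteqP; split=> [w /stage_exhaust[k wk]|w [k _ [_ Tt]]] //; exists k.
have tt : 0 <= t <= t by rewrite t_ge0 lexx.
by apply: (sigma_bigcup Gu_sigma) => k; exact: (Gu_stage_window (good_stage_iter k) tt).1.
Qed.

End stopping_time.

Theorem lemma5p3
  (R : realType) (d : measure_display) (Omega : measurableType d)
  (P : probability Omega R)
  (I K : finType) (J : {set (I * K)})
  (lam : I -> R) (mu : I * K -> R)
  (hlam : forall i, 0 < lam i) (hmu : forall j, j \in J -> 0 < mu j)
  (Ach : I -> R -> Omega -> nat) (Sch : I * K -> R -> Omega -> nat)
  (hA : forall i, renewal_process P (Ach i))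
  (hS : forall j, j \in J -> renewal_process P (Sch j))
  (Y : completePseudoMetricType R) (hY : polish_space Y)
  (Ups : Omega -> Y)
  (hUps : forall B, borel_sets B -> measurable (Ups @^-1` B))
  (hindep : mutually_independent P
     (fun x : option (I + (I * K)) =>
        match x with Some (inr j) => j \in J | _ => True end)
     (fun x => match x with
        | Some (inl i) => gen_sigma
            [set E | exists (t : R) (B : set nat), 0 <= t /\ E = Ach i t @^-1` B]
        | Some (inr j) => gen_sigma
            [set E | exists (t : R) (B : set nat), 0 <= t /\ E = Sch j t @^-1` B]
        | None => gen_sigma [set Ups @^-1` B | B in @borel_sets Y]
        end))
  (T : I * K -> R -> Omega -> R)
  (hT : admissible J lam mu Ach Sch T Ups (@borel_sets Y)) :
  forall t : R, 0 <= t ->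
  forall (uI : I -> R) (uJ : I * K -> R), in_U J uI uJ ->
    G_n J lam mu Ach Sch Ups (@borel_sets Y) uI uJ (Tbar_le J T t uI uJ).
Proof.
move=> t t0 uI uJ [_ uJ0].
have [tuI|ntuI] := pselect (forall i, t <= uI i); last first.
  suff -> : Tbar_le J T t uI uJ = set0 by exact: sigma_algebra0.
  by apply/seteqP; split=> w // [/ntuI].
have -> : Tbar_le J T t uI uJ = T_le_u J T uJ t by apply/seteqP; split=> w // [].
have [_ [Tmono [Tlip [T0 [_ [_ Tmeas]]]]]] := hT.
apply: Gu_T_le_u t0 tuI uJ0 _ _ Tmono _ T0 _
  => [j w x y jJ x0 xy|j w x jJ x0|j w s s' jJ s0 ss'|j s c jJ s0].
- exact: (renewal_process_scaled_mono (hS j jJ) w (hmu j jJ) x0 xy).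
- exact: (renewal_process_scaled_right_const (hS j jJ) w (hmu j jJ) x0).
- exact: (le_add_of_dist_le ss' (Tlip j w s s' jJ s0 (le_trans s0 ss'))).
- apply: (Tmeas j s [set x : R | x <= c] jJ s0).
  rewrite (_ : [set x | x <= c] = `]-oo, c]%classic); first exact: measurable_itv.
  by apply/seteqP; split=> x /=; rewrite in_itv.
Qed.
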